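(* Consider the two-stage cooperative cellular/D2D recovery model described in the context, with lossless links in the second stage, and suppose the algorithm NCMI-Instant (described in the context) is used. Then its packet completion time $T$ satisfies \[ T \leq \left\lceil \min\Big(\max \big(\tfrac{M}{2},|\mathcal{M}_c|\big),\ \max\big(|\mathcal{M}_c|,\tfrac{1}{3}\big(2 \min_{n \in \mathcal{N}} |\mathcal{W}_n|+|\mathcal{M}_d|\big), \tfrac{1}{2}\big(\min_{n \in \mathcal{N}} |\mathcal{W}_n|+|\mathcal{M}_d|\big)\big)\Big) \right\rceil . \]
   Context: Model: a set $\mathcal{N}$ of $N\ge 2$ cooperating mobile devices want a common finite set $\mathcal{M}$ of packets, $M=|\mathcal{M}|$. After a lossy first-stage cellular broadcast, device $n$ holds its Has set $\mathcal{H}_n\subseteq\mathcal{M}$ and misses its Wants set $\mathcal{W}_n=\mathcal{M}\setminus\mathcal{H}_n$; every packet of $\mathcal{M}$ is wanted by at least one device. In the second stage time is slotted; in each slot the source (holding all packets) may broadcast one coded packet over cellular links to all devices and simultaneously one device may broadcast over D2D links to all other devices one coded packet composed only of packets it holds. The packet completion time $T$ is the number of second-stage slots until every device has decoded all packets of its Wants set. Second-stage links are lossless. Grouping (Algorithm 1): process $p_1,\dots,p_M$ in order; for $p_m$ form a length-$N$ vector $v_m$ with $v_m[n]=p_m$ if $p_m\in\mathcal{W}_n$, else NULL. If a previously formed vector $v_{m'}$ has $v_{m'}[n]=\mathrm{NULL}$ for all $n$ with $v_m[n]=p_m$, replace $v_{m'}$ by $v_{m'}+v_m$ (entrywise, $p+\mathrm{NULL}=p$)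 and discard $v_m$. Each final vector gives an instantly decodable coded packet, the XOR of its distinct non-NULL entries. $\mathcal{M}_c$: coded packets from vectors whose entries are all equal and non-NULL (packets wanted by all devices); $\mathcal{M}_d$: from vectors with at least one NULL entry (sendable in one D2D slot by a device $x$ with $v[x]=\mathrm{NULL}$); $\mathcal{M}_l$: from the remaining vectors (no NULL, at least two distinct entries), each of which is sent over D2D by splitting it into two parts each held by some device (two D2D slots). NCMI-Instant (lossless): compute $\mathcal{M}_c,\mathcal{M}_l,\mathcal{M}_d$ once. In each slot the source sends a not-yet-sent packet from $\mathcal{M}_c$ if any remain, else from $\mathcal{M}_l$, else from $\mathcal{M}_d$; simultaneously a device sends a not-yet-sent packet of $\mathcal{M}_d$ if any remain, and otherwise one part of a not-yet-sent packet of $\mathcal{M}_l$. Each coded packet is sent once (across both interfaces). *)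

From mathcomp Require Import all_boot all_order all_algebra.
Set Implicit Arguments. Unset Strict Implicit. Unset Printing Implicit Defensive.

Section NCMI.
Variables (N M : nat).

(* Devices are 'I_N, packets p_1..p_M are 'I_M (in their natural order).
   A Has-set assignment is H : 'I_N -> {set 'I_M}; Wants set W_n = M \ H_n. *)
Definition Wants (H : 'I_N -> {set 'I_M}) (n : 'I_N) : {set 'I_M} := ~: H n.

Definition pvec := {ffun 'I_N -> option 'I_M}.

Definition vec_of (H : 'I_N -> {set 'I_M}) (m : 'I_M) : pvec :=
  [ffun n => if m \in Wants H n then Some m else None].

Definition mergeable (u v : pvec) : bool :=
  [forall n, (v n != None) ==> (u n == None)].

Definition vmerge (u v : pvec) : pvec :=
  [ffun n => if u n is Some p then Some p else v n].

Fixpoint insert_vec (v : pvec) (acc : seq pvec) : seq pvec :=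
  match acc with
  | [::] => [:: v]
  | u :: acc' => if mergeable u v then vmerge u v :: acc' else u :: insert_vec v acc'
  end.

Definition grouping (H : 'I_N -> {set 'I_M}) : seq pvec :=
  foldl (fun acc m => insert_vec (vec_of H m) acc) [::] (enum 'I_M).

Definition is_c (u : pvec) : bool := [exists p : 'I_M, [forall n, u n == Some p]].
Definition is_d (u : pvec) : bool := [exists n, u n == None].
Definition is_l (u : pvec) : bool := ~~ is_c u && ~~ is_d u.

Definition card_Mc H := count is_c (grouping H).
Definition card_Md H := count is_d (grouping H).
Definition card_Ml H := count is_l (grouping H).

(* min_{n} |W_n| (M is a neutral upper bound since |W_n| <= M and N >= 1). *)
Definition min_wants (H : 'I_N -> {set 'I_M}) : nat :=
  \big[minn/M]_(n < N) #|Wants H n|.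

End NCMI.

(* NCMI-Instant schedule, on the numbers of not-yet-sent coded packets.
   State: (c, l, h, d) = remaining unsent packets of M_c, remaining Ml packets
   of which no part has been sent, h = 1 iff one Ml packet has exactly one of
   its two parts sent over D2D, remaining unsent packets of M_d. *)
Record sched_state := SState { rc : nat; rl : nat; rh : bool; rd : nat }.

Definition slot (s : sched_state) : sched_state :=
  let: SState c l h d := s in
  (* cellular (source) transmission *)
  let: (c1, l1, d1) :=
     if 0 < c then (c.-1, l, d)
     else if 0 < l then (c, l.-1, d)
     else if 0 < d then (c, l, d.-1)
     else (c, l, d) in
  (* D2D transmission *)
  if 0 < d1 then SState c1 l1 h d1.-1
  else if h then SState c1 l1 false d1
  else if 0 < l1 then SState c1 l1.-1 true d1
  else SState c1 l1 h d1.

Definition finished (s : sched_state) : bool :=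
  [&& rc s == 0, rl s == 0, ~~ rh s & rd s == 0].

Definition init_state (c l d : nat) : sched_state := SState c l false d.

Definition is_completion_time (c l d T : nat) : Prop :=
  finished (iter T slot (init_state c l d)) /\
  forall t, t < T -> ~~ finished (iter t slot (init_state c l d)).

(* With c, l, d unsent packets of M_c, M_l, M_d, every slot of NCMI-Instant
   lowers max (c, ceil ((2c + 2l + d) / 3), ceil ((c + l + d) / 2)) by exactly
   one until everything is delivered, so this potential is the completion time.
   Two counting facts about Algorithm 1 bound it: a coded packet mixes at least
   as many distinct packets as the slots it costs (one for M_c and M_d, two for
   M_l), whence c + 2l + d <= M; and M_c, M_l packets have no NULL entry, so
   each of them is wanted by every device, whence c + l <= min_n |W_n|. *)
From mathcomp Require Import all_boot all_order all_algebra zify lra.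
Import Order.TTheory GRing.Theory Num.Theory.

Section OrderedFieldFacts.
Local Open Scope ring_scope.

Lemma ceil_max (R : archiFieldType) (x y : R) :
  Num.ceil (Num.max x y) = Num.max (Num.ceil x) (Num.ceil y).
Proof.
case: (leP x y) => [hxy|/ltW hyx]; first by rewrite !max_r ?le_ceil.
by rewrite !max_l ?le_ceil.
Qed.

Lemma natz_max (a b : nat) : (maxn a b)%:Z = Num.max a%:Z b%:Z.
Proof.
case: (leqP a b) => [hab|/ltnW hba]; first by rewrite max_r ?lez_nat // (maxn_idPr hab).
by rewrite max_l ?lez_nat // (maxn_idPl hba).
Qed.

Lemma ceil_natdiv (R : archiFieldType) (a k : nat) : (0 < k)%N ->
  Num.ceil (a%:R / k%:R : R) = ((a + k.-1) %/ k)%:Z.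
Proof.
move=> k_gt0; apply: ceil_def.
set q := ((a + k.-1) %/ k)%N.
have [lo hi] : (a <= q * k)%N /\ (q * k < a + k)%N.
  have := leq_trunc_div (a + k.-1) k; have := divn_eq (a + k.-1) k.
  have := ltn_pmod (a + k.-1) k_gt0; rewrite -/q; lia.
have k0 : (0 : R) < k%:R by rewrite ltr0n.
rewrite ler_pdivrMr // ltr_pdivlMr // intrD !pmulrn.
move: lo hi; rewrite -(ltr_nat R) -(ler_nat R) !natrD !natrM.
lra.
Qed.

Lemma completion_bound_le (R : realFieldType) (c l d M w : R) :
  0 <= l -> c + 2 * l + d <= M -> c + l <= w ->
  Num.max c (Num.max ((2 * c + 2 * l + d) / 3) ((c + l + d) / 2)) <=
  Num.min (Num.max (M / 2) c) (Num.max c (Num.max ((2 * w + d) / 3) ((w + d) / 2))).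
Proof.
move=> l_ge0 hM hw; rewrite le_min; apply/andP; split.
  rewrite !ge_max !le_max lexx orbT /=; apply/andP; split; last by apply/orP; left; lra.
  by apply/orP; case: (leP (2 * c) M) => hc; [left|right]; lra.
by apply: le_max2 => //; apply: le_max2; lra.
Qed.

End OrderedFieldFacts.

Definition slots_left (s : sched_state) : nat :=
  let: SState c l h d := s in
  maxn c (maxn ((2 * c + 2 * l + h + d + 2) %/ 3) ((c + l + h + d + 1) %/ 2)).

Lemma slot_finished s : finished s -> slot s = s.
Proof. by case: s => [[|c] [|l] [] [|d]]. Qed.

Lemma slots_left_eq0 s : (slots_left s == 0) = finished s.
Proof. case: s => c l [] d; rewrite /finished /=; lia. Qed.

Lemma slots_left_slot s : ~~ finished s -> slots_left (slot s) = (slots_left s).-1.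
Proof. by case: s => [[|c] [|[|l]] [] [|[|d]]] //= _; lia. Qed.

Lemma slots_left_iter s t : slots_left (iter t slot s) = slots_left s - t.
Proof.
elim: t => [|t IHt]; first by rewrite subn0.
rewrite iterS; have [fin_t|unfin_t] := boolP (finished (iter t slot s)).
  by rewrite slot_finished // IHt; move: fin_t; rewrite -slots_left_eq0 IHt; lia.
by rewrite slots_left_slot // IHt; lia.
Qed.

Lemma is_completion_time_slots_left c l d :
  is_completion_time c l d (slots_left (init_state c l d)).
Proof.
split=> [|t lt_tT]; first by rewrite -slots_left_eq0 slots_left_iter subnn.
by rewrite -slots_left_eq0 slots_left_iter; lia.
Qed.

Lemma slots_left_init (R : archiFieldType) c l d :
  ((slots_left (init_state c l d))%:Z =
   Num.ceil (Num.max (c%:R : R)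
               (Num.max ((2 * c + 2 * l + d)%:R / 3) ((c + l + d)%:R / 2))))%R.
Proof.
by rewrite !ceil_max !ceil_natdiv // pmulrn intrKceil -!natz_max /= !addn0.
Qed.

Section Grouping.
Context {N M : nat}.
Implicit Types (H : 'I_N -> {set 'I_M}) (u v : pvec N M) (acc : seq (pvec N M)).

Definition nonnull_at (n : 'I_N) u : bool := u n != None.

Definition nonnull u : bool := [exists n, nonnull_at n u].

Definition packets u : {set 'I_M} := [set p | [exists n, u n == Some p]].

Definition partial_grouping H (s : seq 'I_M) : seq (pvec N M) :=
  foldl (fun acc m => insert_vec (vec_of H m) acc) [::] s.

Lemma partial_grouping_rcons H s m :
  partial_grouping H (rcons s m) = insert_vec (vec_of H m) (partial_grouping H s).
Proof. exact: foldl_rcons. Qed.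

Lemma count_nonnull_at_insert n v acc :
  count (nonnull_at n) (insert_vec v acc) = count (nonnull_at n) acc + nonnull_at n v.
Proof.
elim: acc => [|u acc IHacc] /=; first by rewrite addn0.
case: ifP => [/forallP/(_ n)|_] /=; last by rewrite IHacc addnA.
by rewrite /nonnull_at ffunE; case: (u n) => [p|]; case: (v n) => [q|] //= _; lia.
Qed.

Lemma count_nonnull_at_partial_grouping H n s :
  count (nonnull_at n) (partial_grouping H s) = count (mem (Wants H n)) s.
Proof.
elim/last_ind: s => [|s m IHs] //.
rewrite partial_grouping_rcons count_nonnull_at_insert IHs -cats1 count_cat.
by rewrite /nonnull_at ffunE /=; case: ifP.
Qed.

Lemma count_nonnull_at_grouping H n :
  count (nonnull_at n) (grouping H) = #|Wants H n|.
Proof.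
rewrite [grouping H]/(partial_grouping H _) count_nonnull_at_partial_grouping.
by rewrite enumT cardE /enum_mem size_filter.
Qed.

Lemma packets_vmerge u v : packets (vmerge u v) \subset packets u :|: packets v.
Proof.
apply/subsetP => p; rewrite !inE => /existsP[n]; rewrite ffunE.
by case un: (u n) => [q|] vn_p; apply/orP; [left|right]; apply/existsP; exists n;
  rewrite ?un.
Qed.

Lemma card_packets_vec_of H m : #|packets (vec_of H m)| <= 1.
Proof.
rewrite -(cards1 m); apply/subset_leq_card/subsetP => p.
by rewrite !inE => /existsP[n]; rewrite ffunE; case: ifP => // _ /eqP[->].
Qed.

Definition total_packets (s : seq (pvec N M)) : nat :=
  sumn [seq #|packets u| | u <- s].

Lemma total_packets_insert v acc :
  total_packets (insert_vec v acc) <= total_packets acc + #|packets v|.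
Proof.
elim: acc => [|u acc IHacc] /=; first by rewrite /total_packets /= addn0.
rewrite /total_packets /=; case: ifP => _ /=; last by rewrite -addnA leq_add2l.
rewrite addnAC leq_add2r.
exact: leq_trans (subset_leq_card (packets_vmerge u v)) (leq_card_setU _ _).1.
Qed.

Lemma total_packets_partial_grouping H s :
  total_packets (partial_grouping H s) <= size s.
Proof.
elim/last_ind: s => [|s m IHs] //.
rewrite partial_grouping_rcons size_rcons.
have := total_packets_insert (vec_of H m) (partial_grouping H s).
have := card_packets_vec_of H m; lia.
Qed.

Lemma all_nonnull_insert v acc :
  nonnull v -> all nonnull acc -> all nonnull (insert_vec v acc).
Proof.
move=> v_nn; elim: acc => [|u acc IHacc] /=; first by rewrite v_nn.
case/andP=> u_nn acc_nn; case: ifP => _ /=; last by rewrite u_nn IHacc.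
rewrite acc_nn andbT; case/existsP: u_nn => n u_n; apply/existsP; exists n.
by move: u_n; rewrite /nonnull_at ffunE; case: (u n).
Qed.

Lemma all_nonnull_partial_grouping H s :
  {in s, forall m, exists n, m \in Wants H n} -> all nonnull (partial_grouping H s).
Proof.
elim/last_ind: s => [|s m IHs] //= wanted.
rewrite partial_grouping_rcons; apply: all_nonnull_insert.
  have /wanted[n m_n] : m \in rcons s m by rewrite mem_rcons mem_head.
  by apply/existsP; exists n; rewrite /nonnull_at ffunE m_n.
by apply: IHs => m' m's; apply: wanted; rewrite mem_rcons inE m's orbT.
Qed.

Lemma is_c_not_d {u} : is_c u -> ~~ is_d u.
Proof.
case/existsP=> p /forallP u_p; apply/existsP => -[n /eqP un].
by have := u_p n; rewrite un.
Qed.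

Lemma card_packets_gt0 {u} : nonnull u -> 0 < #|packets u|.
Proof.
case/existsP=> n; rewrite /nonnull_at; case un: (u n) => [p|] // _.
by apply/card_gt0P; exists p; rewrite inE; apply/existsP; exists n; rewrite un.
Qed.

Lemma is_l_card_packets {u} : nonnull u -> is_l u -> 1 < #|packets u|.
Proof.
case/existsP=> n0; rewrite /nonnull_at; case un0: (u n0) => [p|] // _.
case/andP=> /existsPn/(_ p)/forallPn[n un_p] /existsPn/(_ n).
case un: (u n) => [q|] // _.
have qp : q != p by apply: contraNneq un_p => <-; rewrite un.
have sub_pq : [set p; q] \subset packets u.
  by apply/subsetP => x /set2P[] ->; rewrite inE; apply/existsP;
    [exists n0; rewrite un0 | exists n; rewrite un].
by apply: leq_trans (subset_leq_card sub_pq); rewrite cards2 eq_sym qp.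
Qed.

Lemma class_cost_le_card_packets {u} :
  nonnull u -> is_c u + 2 * is_l u + is_d u <= #|packets u|.
Proof.
move=> u_nn; have := card_packets_gt0 u_nn.
case c_u: (is_c u); first by rewrite /is_l c_u (negbTE (is_c_not_d c_u)) /=; lia.
case d_u: (is_d u); first by rewrite /is_l c_u d_u /=; lia.
have l_u : is_l u by rewrite /is_l c_u d_u.
by rewrite l_u; have := is_l_card_packets u_nn l_u; lia.
Qed.

Lemma count_classes_le_total_packets (s : seq (pvec N M)) : all nonnull s ->
  count (@is_c N M) s + 2 * count (@is_l N M) s + count (@is_d N M) s
    <= total_packets s.
Proof.
elim: s => [|u s IHs] //= /andP[u_nn s_nn].
have := class_cost_le_card_packets u_nn; have := IHs s_nn.
rewrite /total_packets /=; lia.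
Qed.

Lemma count_c_l_le_nonnull_at n (s : seq (pvec N M)) :
  count (@is_c N M) s + count (@is_l N M) s <= count (nonnull_at n) s.
Proof.
elim: s => [|u s IHs] //=.
suff: is_c u + is_l u <= nonnull_at n u by move: IHs; lia.
rewrite /is_l /nonnull_at; have [un|_] := eqVneq (u n) None; last first.
  by case: (is_c u); case: (is_d u).
have d_u : is_d u by apply/existsP; exists n; rewrite un.
by case c_u: (is_c u); [move: (is_c_not_d c_u); rewrite d_u | rewrite d_u].
Qed.

Lemma card_classes_le_M {H} : (forall m, exists n, m \in Wants H n) ->
  card_Mc H + 2 * card_Ml H + card_Md H <= M.
Proof.
move=> wanted; rewrite /card_Mc /card_Ml /card_Md.
have grouping_nn : all nonnull (grouping H).
  by apply: all_nonnull_partial_grouping => m _.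
apply: leq_trans (count_classes_le_total_packets _ grouping_nn) _.
by rewrite -{2}(size_enum_ord M) total_packets_partial_grouping.
Qed.

Lemma card_Mc_Ml_le_min_wants {H} : (forall m, exists n, m \in Wants H n) ->
  card_Mc H + card_Ml H <= min_wants H.
Proof.
move=> wanted; apply: (big_ind (fun x => card_Mc H + card_Ml H <= x)).
- by have := card_classes_le_M wanted; lia.
- by move=> x y cl_x cl_y; rewrite leq_min cl_x cl_y.
- by move=> n _; rewrite -count_nonnull_at_grouping count_c_l_le_nonnull_at.
Qed.

End Grouping.

Theorem theorem2 (N M : nat) (H : 'I_N -> {set 'I_M}) :
  2 <= N ->
  (forall m : 'I_M, exists n : 'I_N, m \in Wants H n) ->
  exists T : nat,
    is_completion_time (card_Mc H) (card_Ml H) (card_Md H) T /\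
    (T%:Z <= Num.ceil
       (Num.min (Num.max (M%:R / 2) (card_Mc H)%:R)
                (Num.max (card_Mc H)%:R
                   (Num.max ((2 * min_wants H + card_Md H)%:R / 3)
                            ((min_wants H + card_Md H)%:R / 2))) : rat))%R.
Proof.
(* No second device is needed. *)
move=> _ wanted.
set c := card_Mc H; set l := card_Ml H; set d := card_Md H; set w := min_wants H.
exists (slots_left (init_state c l d)).
split; first exact: is_completion_time_slots_left.
rewrite (slots_left_init rat); apply: le_ceil.
have := @completion_bound_le rat c%:R l%:R d%:R M%:R w%:R.
rewrite -!natrM -!natrD !ler_nat ler0n.
by rewrite card_classes_le_M // card_Mc_Ml_le_min_wants //; apply.
Qed.
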